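(* Let $G$ be a finite, simple, connected $(q+1)$-regular graph with $n$ vertices and $m$ edges, let $a\in[0,1]$ and $b\in\mathbb R$, and let $\tilde{\mathbf U}$ be the generalized Grover matrix of $G$ with parameters $a,b$. Then \[ \det(\mathbf I_{2m}-u\tilde{\mathbf U})=(1-b^2u^2)^{m-n}\det\Big(\{1+b((1-q)a+bq)u^2\}\mathbf I_n-u((1-q)a+b(q+1))\mathbf P(G)\Big). \]
   Context: $D(G)$ is the set of $2m$ arcs of $G$ (for each edge $uv$, both $(u,v)$ and $(v,u)$); for $e=(u,v)$, $o(e)=u$, $t(e)=v$, $e^{-1}=(v,u)$, and $d_v=\deg v$. The generalized Grover matrix $\tilde{\mathbf U}=(\tilde U_{ef})_{e,f\in D(G)}$ has $\tilde U_{ef}=(2/d_{t(f)}-1)a+b$ if $t(f)=o(e)$ and $f\ne e^{-1}$; $\tilde U_{ef}=(2/d_{t(f)}-1)a$ if $f=e^{-1}$; $0$ otherwise. $\mathbf P(G)=(P_{uv})_{u,v\in V(G)}$ is the transition matrix of the simple random walk: $P_{uv}=1/\deg u$ if $u,v$ are adjacent and $0$ otherwise. *)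

From HB Require Import structures.
From mathcomp Require Import all_boot all_order all_algebra.
Set Implicit Arguments. Unset Strict Implicit. Unset Printing Implicit Defensive.
Import Order.TTheory GRing.Theory Num.Theory.
Local Open Scope ring_scope.

Section Graph.
Variables (T : finType) (g : rel T).

Definition simple_graph := symmetric g /\ irreflexive g.
Definition connected_graph := forall x y : T, connect g x y.
Definition deg (v : T) : nat := #|[set w | g v w]|.
Definition regular_graph (k : nat) := forall v : T, deg v = k.

Definition nedges : nat :=
  #|[set [set p.1; p.2] | p in [set p : T * T | g p.1 p.2]]|.

Definition arc := {p : T * T | g p.1 p.2}.
Definition origin (e : arc) : T := (val e).1.
Definition terminus (e : arc) : T := (val e).2.

Variable R : numFieldType.

Definition grover_entry (a b : R) (e f : arc) : R :=
  if terminus f == origin e then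
    let c := (2 / (deg (terminus f))%:R - 1) * a in
    if val f == (terminus e, origin e) then c else c + b
  else 0.

Definition grover_matrix (a b : R) : 'M[R]_#|{: arc}| :=
  \matrix_(i, j) grover_entry a b (enum_val i) (enum_val j).

Definition transition_matrix : 'M[R]_#|T| :=
  \matrix_(i, j) if g (enum_val i) (enum_val j)
                 then ((deg (enum_val i))%:R)^-1 else 0.

End Graph.

From Pilot Require Import Defs.
From HB Require Import structures.
From mathcomp Require Import all_boot all_order all_algebra.
From mathcomp Require Import ring.
Import Order.TTheory GRing.Theory Num.Theory.
Set Implicit Arguments. Unset Strict Implicit. Unset Printing Implicit Defensive.
Local Open Scope ring_scope.

(** Let [K] and [L] be the arc-by-vertex incidence matrices of origins and
    termini and [J] the permutation matrix of arc reversal. For a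
    [(q+1)]-regular graph the generalized Grover matrix is
    [c K L^T - b J] with [c = (2/(q+1) - 1) a + b]. As [J^2 = 1], the matrix
    [I + ubJ] has inverse [(I - ubJ)/(1 - b^2u^2)], and Sylvester's identity
    [det (I - XY) = det (I - YX)] moves the determinant from arcs to vertices,
    where [L^T K = A], [L^T J = K^T] and [K^T K = (q+1) I]. The remaining
    factor is [det (I + ubJ) = (1 - b^2u^2)^m]: ordering the arcs, [I + tJ]
    factors as a unit lower triangular matrix times an upper triangular one
    whose diagonal carries [1 - t^2] once per pair of opposite arcs. *)

Lemma sum_indicator_mul (R : pzSemiRingType) (I : finType) (x : I) (F : I -> R) :
  \sum_i (i == x)%:R * F i = F x.
Proof.
under eq_bigr do rewrite mulr_natl mulrb.
by rewrite -big_mkcond big_pred1_eq.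
Qed.

Lemma sum_indicator_andb_mul (R : pzSemiRingType) (I : finType) (P : pred I)
    (x : I) (F : I -> R) :
  \sum_i ((i == x) && P i)%:R * F i = (P x)%:R * F x.
Proof.
rewrite (bigD1 x) //= eqxx big1 ?addr0 // => i /negbTE ->.
by rewrite mul0r.
Qed.

Lemma sylvester_det (R : comPzRingType) m n (X : 'M[R]_(m, n)) (Y : 'M[R]_(n, m)) :
  \det (1%:M - X *m Y) = \det (1%:M - Y *m X).
Proof.
have E1 : block_mx 1%:M X Y 1%:M =
    block_mx 1%:M 0 Y 1%:M *m block_mx 1%:M X 0 (1%:M - Y *m X).
  by rewrite mulmx_block !mul1mx !mul0mx !mulmx1 !addr0 addrC subrK.
have E2 : block_mx 1%:M X Y 1%:M =
    block_mx (1%:M - X *m Y) X 0 1%:M *m block_mx 1%:M 0 Y 1%:M.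
  by rewrite mulmx_block !mul1mx !mul0mx !mulmx1 !mulmx0 !add0r subrK.
have := congr1 determinant E1.
rewrite {1}E2 !det_mulmx !det_ublock !det_lblock !det1.
by rewrite !mul1r !mulr1.
Qed.

Section EnumMatrix.
Variable R : pzSemiRingType.

Definition enum_mx (X Y : finType) (F : X -> Y -> R) : 'M[R]_(#|X|, #|Y|) :=
  \matrix_(i, j) F (enum_val i) (enum_val j).

Lemma mul_enum_mx (X Y Z : finType) (F : X -> Y -> R) (G : Y -> Z -> R) :
  enum_mx F *m enum_mx G = enum_mx (fun x z => \sum_y F x y * G y z).
Proof.
apply/matrixP => i k; rewrite !mxE (reindex enum_rank) /=.
  by apply: eq_bigr => y _; rewrite !mxE enum_rankK.
by exists enum_val => y _; rewrite ?enum_valK ?enum_rankK.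
Qed.

Lemma tr_enum_mx (X Y : finType) (F : X -> Y -> R) :
  (enum_mx F)^T = enum_mx (fun y x => F x y).
Proof. by apply/matrixP => i j; rewrite !mxE. Qed.

Lemma enum_mx_eq1 (X : finType) : enum_mx (fun x y : X => (y == x)%:R) = 1%:M.
Proof. by apply/matrixP => i j; rewrite !mxE (inj_eq enum_val_inj) eq_sym. Qed.

Lemma eq_enum_mx (X Y : finType) (F G : X -> Y -> R) :
  F =2 G -> enum_mx F = enum_mx G.
Proof. by move=> eqFG; apply/matrixP => i j; rewrite !mxE eqFG. Qed.

End EnumMatrix.

Section FixedPointFreeInvolution.
Variables (R : comPzRingType) (n : nat) (s : 'I_n -> 'I_n).
Hypotheses (sK : involutive s) (s_neq : forall i, s i != i).

Definition invol_mx : 'M[R]_n := \matrix_(i, j) (j == s i)%:R.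

Let lower_mx : 'M[R]_n := \matrix_(i, j) ((j == s i) && (j < i)%N)%:R.
Let upper_mx : 'M[R]_n := \matrix_(i, j) ((j == s i) && (i < j)%N)%:R.
Let diag_lower_mx : 'M[R]_n := \matrix_(i, j) ((i == j) && (s i < i)%N)%:R.

Let invol_mx_split : invol_mx = lower_mx + upper_mx.
Proof.
apply/matrixP => i j; rewrite !mxE.
have [->|] := eqVneq j (s i); last by rewrite addr0.
by case: ltngtP (s_neq i) => [||/val_inj ->]; rewrite ?eqxx ?addr0 ?add0r.
Qed.

Let mul_lower_upper : lower_mx *m upper_mx = diag_lower_mx.
Proof.
apply/matrixP => i j; rewrite !mxE.
under eq_bigr do rewrite !mxE.
rewrite sum_indicator_andb_mul sK.
have [<-|] := eqVneq i j; last by rewrite /= mulr0.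
by case: (s i < i)%N; rewrite ?mul1r ?mul0r.
Qed.

Let mul_lower_diag : lower_mx *m diag_lower_mx = 0.
Proof.
apply/matrixP => i j; rewrite !mxE.
under eq_bigr do rewrite !mxE.
rewrite sum_indicator_andb_mul sK.
case: ltnP => [lt_si_i|]; last by rewrite mul0r.
by rewrite ltnNge (ltnW lt_si_i) andbF mulr0.
Qed.

Lemma det_add1_invol_mx (t : R) :
  \det (1%:M + t *: invol_mx) = (1 - t ^+ 2) ^+ #|[set i | s i < i]%N|.
Proof.
pose L := 1%:M + t *: lower_mx.
pose U := 1%:M + t *: upper_mx - t ^+ 2 *: diag_lower_mx.
have -> : 1%:M + t *: invol_mx = L *m U.
  rewrite /L /U mulmxDl mul1mx -scalemxAl !mulmxDr mulmxN mulmx1.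
  rewrite -!scalemxAr mul_lower_upper mul_lower_diag scaler0 subr0.
  rewrite invol_mx_split !scalerDr scalerA -expr2.
  rewrite (addrC (t *: lower_mx) (t ^+ 2 *: _)) [RHS]addrA subrK.
  by rewrite addrA addrAC.
rewrite det_mulmx det_trig; last first.
  apply/is_trig_mxP => i j lt_ij; rewrite !mxE.
  by rewrite -val_eqE ltn_eqF // ltnNge (ltnW lt_ij) andbF mulr0 addr0.
rewrite -det_tr det_trig; last first.
  apply/is_trig_mxP => i j lt_ij; rewrite !mxE.
  by rewrite -val_eqE gtn_eqF // ltnNge (ltnW lt_ij) /= andbF !mulr0 addr0 subr0.
rewrite big1 ?mul1r => [|i _]; last first.
  by rewrite !mxE eqxx ltnn andbF mulr0 addr0.
rewrite -prodr_const [RHS]big_mkcond /=; apply: eq_bigr => i _.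
rewrite !mxE eqxx ltnn andbF mulr0 addr0 inE /=.
by case: (s i < i)%N; rewrite ?mulr1 ?mulr0 ?subr0.
Qed.

End FixedPointFreeInvolution.

Lemma det_add_invol_sub_mulmx (F : fieldType) m n (J : 'M[F]_m)
    (K L : 'M[F]_(m, n)) (t c : F) :
  J *m J = 1%:M -> 1 - t ^+ 2 != 0 ->
  \det (1%:M + t *: J - c *: (K *m L^T)) =
  \det (1%:M + t *: J) *
  \det (1%:M - (c / (1 - t ^+ 2)) *: (L^T *m (1%:M - t *: J) *m K)).
Proof.
set x := 1 - t ^+ 2 => JJ x_neq0.
have JJ' : (1%:M + t *: J) *m (1%:M - t *: J) = x%:M.
  rewrite mulmxDl mul1mx mulmxBr mulmx1 -scalemxAl -scalemxAr scalerA JJ.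
  by rewrite addrA subrK -expr2 scalemx1 -raddfB.
have -> : 1%:M + t *: J - c *: (K *m L^T) =
    (1%:M + t *: J) *m (1%:M - ((c / x) *: ((1%:M - t *: J) *m K)) *m L^T).
  rewrite mulmxBr mulmx1 -scalemxAl -scalemxAr !mulmxA JJ' mul_scalar_mx.
  by rewrite -scalemxAl scalerA divfK.
by rewrite det_mulmx sylvester_det -scalemxAr mulmxA.
Qed.

Section GroverMatrix.
Variables (R : numFieldType) (T : finType) (g : rel T).
Hypotheses (gsym : symmetric g) (girr : irreflexive g).

Local Notation arc := (Defs.arc g).

Lemma arc_rev_subproof (e : arc) : g (terminus e) (origin e).
Proof. by rewrite gsym; exact: (valP e). Qed.

Definition arc_rev (e : arc) : arc :=
  exist _ (terminus e, origin e) (arc_rev_subproof e).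

Lemma arc_revK : involutive arc_rev.
Proof. by move=> e; apply: val_inj; case: e => [[x y] ?]. Qed.

Lemma arc_rev_neq (e : arc) : arc_rev e != e.
Proof.
apply/eqP => /(congr1 (@origin _ g)) eq_te.
have : g (origin e) (terminus e) := valP e.
change (terminus e = origin e) in eq_te.
by rewrite eq_te girr.
Qed.

Lemma sum_arc (F : T -> T -> R) :
  \sum_(e : arc) F (origin e) (terminus e) = \sum_x \sum_y (g x y)%:R * F x y.
Proof.
rewrite pair_big /=; under eq_bigr do rewrite mulr_natl mulrb.
rewrite -big_mkcond (reindex_omap (val : arc -> T * T) insub) /=.
  by apply: eq_bigl => -[p gp] /=; rewrite insubT /= eqxx gp.
by move=> p gp; rewrite insubT.
Qed.

Definition origin_mx := enum_mx (fun (e : arc) v => (origin e == v)%:R : R).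
Definition terminus_mx := enum_mx (fun (e : arc) v => (terminus e == v)%:R : R).
Definition arc_rev_mx := enum_mx (fun e f : arc => (f == arc_rev e)%:R : R).
Definition adjacency_mx := enum_mx (fun v w : T => (g v w)%:R : R).

Lemma origin_mx_mul_tr_terminus :
  origin_mx *m terminus_mx^T =
  enum_mx (fun e f : arc => (terminus f == origin e)%:R).
Proof.
rewrite tr_enum_mx mul_enum_mx; apply: eq_enum_mx => e f.
under eq_bigr do rewrite eq_sym.
by rewrite sum_indicator_mul.
Qed.

Lemma grover_matrixE d a b : regular_graph g d ->
  grover_matrix g a b =
  ((2 / d%:R - 1) * a + b) *: (origin_mx *m terminus_mx^T) - b *: arc_rev_mx.
Proof.
move=> reg; rewrite origin_mx_mul_tr_terminus.
apply/matrixP => i j; rewrite !mxE /grover_entry reg.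
set e := enum_val i; set f := enum_val j.
have -> : (val f == (terminus e, origin e)) = (f == arc_rev e) by [].
have [->|_] := eqVneq f (arc_rev e); first by rewrite eqxx !mulr1n !mulr1 addrK.
by case: (_ == _); rewrite !mulr0 subr0 ?mulr1n ?mulr1.
Qed.

Lemma arc_rev_mx_sqr : arc_rev_mx *m arc_rev_mx = 1%:M.
Proof.
rewrite mul_enum_mx -enum_mx_eq1; apply: eq_enum_mx => e h.
by rewrite sum_indicator_mul arc_revK.
Qed.

Definition arc_rev_idx (i : 'I_#|{: arc}|) := enum_rank (arc_rev (enum_val i)).

Lemma arc_rev_idxK : involutive arc_rev_idx.
Proof. by move=> i; rewrite /arc_rev_idx enum_rankK arc_revK enum_valK. Qed.

Lemma arc_rev_idx_neq i : arc_rev_idx i != i.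
Proof.
by rewrite -(inj_eq enum_val_inj) enum_rankK arc_rev_neq.
Qed.

Lemma arc_rev_mxE : arc_rev_mx = invol_mx R arc_rev_idx.
Proof.
apply/matrixP => i j; rewrite !mxE.
by rewrite [j == _]eq_sym -(inj_eq enum_val_inj) enum_rankK eq_sym.
Qed.

Lemma tr_terminus_mx_mul_arc_rev : terminus_mx^T *m arc_rev_mx = origin_mx^T.
Proof.
rewrite !tr_enum_mx mul_enum_mx; apply: eq_enum_mx => v f.
under eq_bigr do rewrite mulrC eq_sym (can2_eq arc_revK arc_revK).
by rewrite sum_indicator_mul.
Qed.

Lemma sum_arc_indicator v w :
  \sum_(e : arc) (origin e == v)%:R * (terminus e == w)%:R = (g v w)%:R :> R.
Proof.
rewrite (sum_arc (fun x y => (x == v)%:R * (y == w)%:R)).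
under eq_bigr do under eq_bigr do rewrite mulrCA.
under eq_bigr do rewrite -mulr_sumr.
rewrite sum_indicator_mul; under eq_bigr do rewrite mulrC.
by rewrite sum_indicator_mul.
Qed.

Lemma sum_arc_origin v : \sum_(e : arc) (origin e == v)%:R = (deg g v)%:R :> R.
Proof.
rewrite (sum_arc (fun x _ => (x == v)%:R)).
under eq_bigr do under eq_bigr do rewrite mulrC.
under eq_bigr do rewrite -mulr_sumr.
rewrite sum_indicator_mul -natr_sum /deg -sum1dep_card.
by congr _%:R; rewrite [RHS]big_mkcond; apply: eq_bigr => y _; case: (g v y).
Qed.

Lemma tr_terminus_mx_mul_origin : terminus_mx^T *m origin_mx = adjacency_mx.
Proof.
rewrite tr_enum_mx mul_enum_mx; apply: eq_enum_mx => v w.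
under eq_bigr do rewrite mulrC.
by rewrite sum_arc_indicator gsym.
Qed.

Lemma tr_origin_mx_mul_origin :
  origin_mx^T *m origin_mx = enum_mx (fun v w => (v == w)%:R * (deg g v)%:R).
Proof.
rewrite tr_enum_mx mul_enum_mx; apply: eq_enum_mx => v w.
rewrite -sum_arc_origin mulr_sumr; apply: eq_bigr => e _.
by have [->|] := eqVneq (origin e) v; rewrite ?mul0r ?mulr0 ?mul1r ?mulr1.
Qed.

Lemma adjacency_mx_regular d :
  regular_graph g d -> adjacency_mx = d%:R *: transition_matrix g R.
Proof.
move=> reg; apply/matrixP => i j; rewrite !mxE reg.
case: ifP => [gij|_]; last by rewrite mulr0.
suff d_gt0 : (0 < d)%N by rewrite mulfV // pnatr_eq0 -lt0n.
rewrite -(reg (enum_val i)) /deg card_gt0; apply/set0Pn.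
by exists (enum_val j); rewrite inE.
Qed.

Lemma tr_terminus_mx_mul_rev_origin d t : regular_graph g d ->
  terminus_mx^T *m (1%:M - t *: arc_rev_mx) *m origin_mx =
  d%:R *: (transition_matrix g R - t%:M).
Proof.
move=> reg; rewrite mulmxBr mulmx1 -scalemxAr tr_terminus_mx_mul_arc_rev.
rewrite mulmxBl -scalemxAl tr_terminus_mx_mul_origin tr_origin_mx_mul_origin.
have -> : enum_mx (fun v w => (v == w)%:R * (deg g v)%:R) = d%:R%:M :> 'M[R]_#|T|.
  apply/matrixP => i j; rewrite !mxE reg (inj_eq enum_val_inj).
  by rewrite mulrC mulr_natr.
by rewrite (adjacency_mx_regular reg) scalerBr !scale_scalar_mx mulrC.
Qed.

Definition arc_ends (e : arc) : {set T} := [set origin e; terminus e].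

Lemma arc_eq (e f : arc) : origin e = origin f -> terminus e = terminus f -> e = f.
Proof. by move=> eq_o eq_t; apply: val_inj; apply: injective_projections. Qed.

Lemma arc_ends_eq (e f : arc) :
  arc_ends e = arc_ends f -> f = e \/ f = arc_rev e.
Proof.
move=> eq_ends.
have of_ends : origin f \in arc_ends e by rewrite eq_ends set21.
have tf_ends : terminus f \in arc_ends e by rewrite eq_ends set22.
have of_neq_tf : origin f != terminus f.
  have gf : g (origin f) (terminus f) := valP f.
  by apply: contraTneq gf => ->; rewrite girr.
move: of_ends tf_ends; rewrite !in_set2.
case/orP => /eqP eq_o; rewrite eq_o eq_sym in of_neq_tf.
- by rewrite (negbTE of_neq_tf) => /eqP eq_t; left; apply: arc_eq.
- by rewrite (negbTE of_neq_tf) orbF => /eqP eq_t; right; apply: arc_eq.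
Qed.

Lemma card_arc_rev_idx_lt : #|[set i | arc_rev_idx i < i]%N| = nedges g.
Proof.
rewrite /nedges; set S := [set i | _].
have ends_rev i : arc_ends (enum_val (arc_rev_idx i)) = arc_ends (enum_val i).
  by rewrite /arc_rev_idx enum_rankK /arc_ends setUC.
have -> : [set [set p.1; p.2] | p in [set p : T * T | g p.1 p.2]] =
          [set arc_ends (enum_val i) | i in S].
  apply/setP => E; apply/imsetP/imsetP => [[p]|[i _ ->]]; last first.
    by exists (val (enum_val i)); rewrite // inE; exact: (valP (enum_val i)).
  rewrite inE => gp ->; set k := enum_rank (exist _ p gp : arc).
  have ends_k : arc_ends (enum_val k) = [set p.1; p.2] by rewrite enum_rankK.
  have [lt_k|gt_k|/val_inj eq_k] := ltngtP (arc_rev_idx k) k.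
  - by exists k; rewrite ?inE.
  - by exists (arc_rev_idx k); rewrite ?inE ?arc_rev_idxK ?ends_rev.
  - by have := arc_rev_idx_neq k; rewrite eq_k eqxx.
rewrite card_in_imset // => i j; rewrite !inE => lt_i lt_j.
case/arc_ends_eq => [/enum_val_inj -> // | eq_j]; move: lt_j.
have -> : j = arc_rev_idx i by apply: enum_val_inj; rewrite enum_rankK.
by rewrite arc_rev_idxK => /(ltn_trans lt_i); rewrite ltnn.
Qed.

End GroverMatrix.

Theorem corollary1 (C : numClosedFieldType) (T : finType) (g : rel T) (q : nat)
    (a b u : C) :
  simple_graph g -> connected_graph g -> regular_graph g q.+1 ->
  0 <= a <= 1 -> b \is Num.real ->
  1 - b ^+ 2 * u ^+ 2 != 0 ->
  \det (1%:M - u *: grover_matrix g a b) =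
    (1 - b ^+ 2 * u ^+ 2) ^ ((nedges g)%:Z - (#|T|)%:Z) *
    \det ((1 + b * ((1 - q%:R) * a + b * q%:R) * u ^+ 2)%:M
          - (u * ((1 - q%:R) * a + b * (q.+1)%:R)) *: transition_matrix g C).
Proof.
move=> [gsym girr] _ reg _ _.
set x := 1 - b ^+ 2 * u ^+ 2 => x_neq0.
have ub_sqr : 1 - (u * b) ^+ 2 = x by rewrite /x exprMn mulrC.
set c := (2 / (q.+1)%:R - 1) * a + b.
have -> : 1%:M - u *: grover_matrix g a b =
    1%:M + (u * b) *: arc_rev_mx C gsym
    - (u * c) *: (origin_mx C g *m (terminus_mx C g)^T).
  by rewrite (grover_matrixE gsym _ _ reg) scalerBr !scalerA opprB addrA.
rewrite det_add_invol_sub_mulmx ?arc_rev_mx_sqr ?ub_sqr //.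
rewrite (tr_terminus_mx_mul_rev_origin gsym _ reg) arc_rev_mxE.
rewrite det_add1_invol_mx ?ub_sqr; [|exact: arc_rev_idxK|exact: arc_rev_idx_neq].
rewrite card_arc_rev_idx_lt //.
have q1_neq0 : 1 + q%:R != 0 :> C by rewrite addrC natr1 pnatr_eq0.
have -> : 1%:M - (u * c / x) *:
      ((q.+1)%:R *: (transition_matrix g C - (u * b)%:M)) =
    x^-1 *: ((1 + b * ((1 - q%:R) * a + b * q%:R) * u ^+ 2)%:M
             - (u * ((1 - q%:R) * a + b * (q.+1)%:R)) *: transition_matrix g C).
  move: (transition_matrix g C) => P; apply/matrixP => i j; rewrite !mxE /c.
  by case: (i == j); rewrite ?mulr1n ?mulr0n /x; field;
    rewrite exprMn x_neq0 q1_neq0.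
rewrite detZ mulrA exprVn; congr (_ * _).
by rewrite expfzDr // -exprnP -exprnN.
Qed.
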